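(* Let $\sigma,\lambda,\psi>0$, $0<\beta<1$, $\mu>0$. Consider the model $x_t=\hat E_t x_{t+1}-\sigma(i_t-\hat E_t\pi_{t+1})+\epsilon_t$, $\pi_t=\lambda x_t+\beta\hat E_t\pi_{t+1}$, $i_t=\max\{\psi\pi_t,-\mu\}$, where expectations are formed by the learning rule $\hat E_t Y_{t+j}=Y^e_t$ with $Y^e_t=Y^e_{t-1}+t^{-1}(Y_{t-1}-Y^e_{t-1})$, $Y_t=(x_t,\pi_t)'$ (so $Y^e_t$ is determined by data up to date $t-1$). Then the model is coherent and complete: at every date $t$, for every value of the predetermined forecast $Y^e_t\in\mathbb{R}^2$ and every value of the shock $\epsilon_t\in\mathbb{R}$, there exists exactly one $(x_t,\pi_t)\in\mathbb{R}^2$ solving the three equations.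
   Context: $x_t$ is the output gap, $\pi_t$ inflation, $i_t$ the nominal interest rate, $\epsilon_t$ an exogenous demand shock. Agents observe endogenous variables only with a one-period lag (lagged information), so the forecast $Y^e_t$ is taken as given when solving for date-$t$ outcomes. *)

From Stdlib Require Import Reals.
Open Scope R_scope.

(* The three date-t equations of the model, with the learning forecast
   hat E_t x_{t+1} = xe, hat E_t pi_{t+1} = pie  (Y^e_t = (xe, pie)')
   taken as given (lagged information), shock eps = epsilon_t. *)
Definition temporary_eq (sigma lambda beta psi mu xe pie eps x pi i : R) : Prop :=
  x = xe - sigma * (i - pie) + eps /\
  pi = lambda * x + beta * pie /\
  i = Rmax (psi * pi) (- mu).

(* Substituting the Phillips curve and the policy rule into the IS curve
   leaves a single equation for inflation,
     pi + lambda sigma max(psi pi, -mu) = lambda (xe + sigma pie + eps) + beta pie,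
   whose left-hand side is a continuous, piecewise linear, strictly increasing
   function of pi with slopes 1 and 1 + lambda sigma psi, hence a bijection of R.
   The output gap and the interest rate are then read off from pi. *)

From Stdlib Require Import Reals Lra Psatz.
Open Scope R_scope.

Section KinkedMap.

Variables k psi c : R.
Hypothesis Hk : 0 <= k.
Hypothesis Hpsi : 0 <= psi.

Definition kinked_map (p : R) : R := p + k * Rmax (psi * p) c.

Lemma kinked_map_increasing (p q : R) : p < q -> kinked_map p < kinked_map q.
Proof.
  intros Hpq; unfold kinked_map.
  assert (Hmax : Rmax (psi * p) c <= Rmax (psi * q) c).
  { apply Rle_max_compat_r, Rmult_le_compat_l; lra. }
  nra.
Qed.

Lemma kinked_map_inj (p q : R) : kinked_map p = kinked_map q -> p = q.
Proof.
  intros Heq.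
  destruct (Rtotal_order p q) as [Hpq | [Hpq | Hqp]]; [| exact Hpq |].
  - apply kinked_map_increasing in Hpq; lra.
  - apply kinked_map_increasing in Hqp; lra.
Qed.

Lemma kinked_map_surj (b : R) : exists p, kinked_map p = b.
Proof.
  unfold kinked_map.
  assert (Hslope : 0 < 1 + k * psi) by nra.
  (* t solves the equation on the branch where the kink is not binding *)
  set (t := b / (1 + k * psi)).
  assert (Hb : b = t * (1 + k * psi)) by (unfold t; field; lra).
  destruct (Rle_dec c (psi * t)) as [Hup | Hdown].
  - exists t. rewrite Rmax_left by lra. lra.
  - exists (b - k * c). rewrite Rmax_right; [ring | nra].
Qed.

End KinkedMap.

Lemma temporary_eq_iff (sigma lambda beta psi mu xe pie eps x pi i : R) :
  temporary_eq sigma lambda beta psi mu xe pie eps x pi i <->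
  kinked_map (lambda * sigma) psi (- mu) pi
    = lambda * (xe + sigma * pie + eps) + beta * pie /\
  i = Rmax (psi * pi) (- mu) /\
  x = xe + sigma * pie + eps - sigma * i.
Proof.
  unfold temporary_eq, kinked_map; split.
  - intros (Hx & Hpi & Hi).
    rewrite <- Hi, Hpi, Hx.
    split; [ring | split; [reflexivity | ring]].
  - intros (Hpi & Hi & Hx); subst i x.
    split; [ring | split; [lra | reflexivity]].
Qed.

Theorem proposition2 (sigma lambda beta psi mu : R)
  (Hsigma : 0 < sigma) (Hlambda : 0 < lambda) (Hpsi : 0 < psi)
  (Hbeta0 : 0 < beta) (Hbeta1 : beta < 1) (Hmu : 0 < mu) :
  forall (Ye : R * R) (eps : R),
    exists! Y : R * R,
      exists i : R,
        temporary_eq sigma lambda beta psi mu (fst Ye) (snd Ye) eps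
          (fst Y) (snd Y) i.
Proof.
  intros [xe pie] eps; simpl.
  assert (Hk : 0 <= lambda * sigma) by nra.
  assert (Hpsi' : 0 <= psi) by lra.
  destruct (kinked_map_surj (lambda * sigma) psi (- mu) Hk Hpsi'
              (lambda * (xe + sigma * pie + eps) + beta * pie)) as [pi Hpi].
  set (i := Rmax (psi * pi) (- mu)).
  exists (xe + sigma * pie + eps - sigma * i, pi); split.
  - exists i; apply temporary_eq_iff; simpl; auto.
  - intros [x' pi'] [i' Heq]; simpl in Heq.
    apply temporary_eq_iff in Heq as (Hpi' & -> & ->).
    assert (pi = pi') as <-
      by (apply (kinked_map_inj (lambda * sigma) psi (- mu) Hk Hpsi'); congruence).
    reflexivity.
Qed.
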